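(* Let $\gamma\in F$ be hyperbolic, with associated sequences $\{U_n^\pm\}$ and relations $\sim^\pm$. Let $\phi$ be a continuous $\Gamma$-invariant function on $\mathcal B^0_\infty$ whose induced function on $\mathcal B^0_\infty/\Gamma$ has compact support, and set $\phi^+=\limsup_{n\to+\infty}\phi\circ\gamma^n$ and $\phi^-=\limsup_{n\to+\infty}\phi\circ\gamma^{-n}$. Then $f\sim^+g$ implies $\phi^+(f)=\phi^+(g)$, and $f\sim^-g$ implies $\phi^-(f)=\phi^-(g)$.
   Context: Setting: a (3,4)-configuration data $(W,\Gamma,O_3,O_4)$ ($W$ metrisable, $\Gamma$ discrete acting continuously, $O_3,O_4$ open subsets of $W^3,W^4$ off the diagonals, $\Gamma$-invariant with proper action, $p(O_4)=O_3$). $B=\mathbb{QP}^1$ is the vertex set of the Farey tessellation of $\mathbb H^2$ and tribones are the vertex triples of its ideal triangles. $\mathcal B_\infty=W^B$ (product topology), $\mathcal B^0_\infty$ the open subset of maps sending at least one tribone into $O_3$; $\Gamma$ acts by post-composition, $\gamma\in F=PSL(2,\mathbb Z)$ by $f\mapsto f\circ\gamma$. For hyperbolic $\gamma$, $\{U_n^+\}$, $\{U_n^-\}$ are decreasing sequences of connected subsets of $B$ (unions of quadribones with connected edge set in the dual tree) with empty intersections and $U_0^+\cap U_0^-=\emptyset$, such that every finite $K\subset B$ satisfies $\gamma^p(K)\subset U_n^+$ (resp. $\gamma^{-p}(K)\subset U_n^-$) for some $p$. $f\sim^+g$ means $f|_{U_n^+}=g|_{U_n^+}$ for some $n$; $f\sim^-g$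 means $f|_{U_n^-}=g|_{U_n^-}$ for some $n$. *)

From HB Require Import structures.
From mathcomp Require Import all_boot all_order all_algebra.
From mathcomp Require Import all_classical all_reals all_analysis.
From Stdlib Require Import Relation_Operators.
Set Implicit Arguments. Unset Strict Implicit. Unset Printing Implicit Defensive.
Import Order.TTheory GRing.Theory Num.Theory.
Local Open Scope classical_set_scope.
Local Open Scope ring_scope.

(* B = QP^1 = Q u {oo}; [None] is the point at infinity. *)
Definition QP1 := option rat.

(* Moebius action of an integer 2x2 matrix [[a,b],[c,d]] : x |-> (ax+b)/(cx+d).
   Elements of F = PSL(2,Z) are represented by matrices of SL(2,Z)
   (M and -M act identically). *)
Definition mob (M : 'M[int]_2) (x : QP1) : QP1 :=
  let a : rat := (M 0 0)%:~R in let b : rat := (M 0 1)%:~R in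
  let c : rat := (M 1 0)%:~R in let d : rat := (M 1 1)%:~R in
  match x with
  | Some q => if c * q + d == 0 then None else Some ((a * q + b) / (c * q + d))
  | None => if c == 0 then None else Some (a / c)
  end.

Definition SL2Z (M : 'M[int]_2) : Prop := \det M = 1.

Definition hyperbolic (M : 'M[int]_2) : Prop := SL2Z M /\ (2 < `| \tr M |)%R.

Definition tri3 (x y z : QP1) : set QP1 := [set w | w = x \/ w = y \/ w = z].

(* vertex sets of the ideal triangles of the Farey tessellation: the
   PSL(2,Z)-images of the ideal triangle (0, 1, oo) *)
Definition farey_triangle (T : set QP1) : Prop :=
  exists M, SL2Z M /\ T = tri3 (mob M (Some 0)) (mob M (Some 1)) (mob M None).

Definition tribone (t : QP1 * QP1 * QP1) : Prop :=
  [/\ t.1.1 <> t.1.2, t.1.1 <> t.2, t.1.2 <> t.2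
    & farey_triangle (tri3 t.1.1 t.1.2 t.2)].

(* edges of the dual tree: pairs of distinct adjacent (sharing an edge)
   Farey triangles; the associated quadribone is the union of their vertices *)
Definition dual_edge (e : set QP1 * set QP1) : Prop :=
  [/\ farey_triangle e.1, farey_triangle e.2, e.1 <> e.2 &
      exists x y, [/\ x <> y, e.1 x, e.1 y, e.2 x & e.2 y]].

Definition quadribone (e : set QP1 * set QP1) : set QP1 := e.1 `|` e.2.

Definition edges_touch (e e' : set QP1 * set QP1) : Prop :=
  e.1 = e'.1 \/ e.1 = e'.2 \/ e.2 = e'.1 \/ e.2 = e'.2.

Definition edges_connected (E : set (set QP1 * set QP1)) : Prop :=
  forall e e', E e -> E e' ->
    clos_refl_trans _ (fun a b => [/\ E a, E b & edges_touch a b]) e e'.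

Definition quadribone_connected (U : set QP1) : Prop :=
  exists E : set (set QP1 * set QP1),
    [/\ (forall e, E e -> dual_edge e), edges_connected E &
        U = \bigcup_(e in E) quadribone e].

Definition off_diag3 {W : Type} (x : W * W * W) : Prop :=
  [/\ x.1.1 <> x.1.2, x.1.1 <> x.2 & x.1.2 <> x.2].

Definition off_diag4 {W : Type} (x : W * W * W * W) : Prop :=
  [/\ off_diag3 x.1, x.1.1.1 <> x.2, x.1.1.2 <> x.2 & x.1.2 <> x.2].

Definition act3 {G W : Type} (act : G -> W -> W) (g : G) (x : W * W * W) :=
  (act g x.1.1, act g x.1.2, act g x.2).

Definition act4 {G W : Type} (act : G -> W -> W) (g : G) (x : W * W * W * W) :=
  (act3 act g x.1, act g x.2).

Definition proj43 {W : Type} (x : W * W * W * W) : W * W * W := x.1.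

Definition proper_action {G : Type} {X : topologicalType}
  (a : G -> X -> X) (O : set X) : Prop :=
  forall K, compact K -> K `<=` O ->
    finite_set [set g | (a g @` K) `&` K !=set0].

Definition g_invariant {G X : Type} (a : G -> X -> X) (O : set X) : Prop :=
  forall g x, O x -> O (a g x).

Notation Binf W := {ptws QP1 -> W}.

Definition Binf0 {W : Type} (O3 : set (W * W * W)) : set (Binf W) :=
  [set f | exists t, tribone t /\ O3 (f t.1.1, f t.1.2, f t.2)].

(* Subsets of X0/G are encoded by their (G-g_invariant) preimages S in X0, and
   open subsets of the quotient topology by G-g_invariant open subsets of X0;
   the statement is the open-cover definition of compactness in X0/G. *)
Definition quotient_compact {G : Type} {X : topologicalType}
  (a : G -> X -> X) (X0 : set X) (S : set X) : Prop :=
  forall (I : Type) (O : I -> set X),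
    (forall i, [/\ open (O i), O i `<=` X0 & g_invariant a (O i)]) ->
    S `<=` \bigcup_i O i ->
    exists J : set I, finite_set J /\ S `<=` \bigcup_(i in J) O i.

(* Preimage in X0 of the support of the function induced on X0/G by a
   G-g_invariant function phi: the closure in X0 of [phi <> 0]. *)
Definition support_in {X : topologicalType} {R : realType}
  (X0 : set X) (phi : X -> R) : set X :=
  X0 `&` closure [set x | X0 x /\ phi x != 0].

Definition phi_plus {W : Type} {R : realType} (phi : Binf W -> R)
  (M : 'M[int]_2) (f : QP1 -> W) : \bar R :=
  limn_esup (fun n => (phi (f \o mob (M ^+ n)))%:E).

Definition phi_minus {W : Type} {R : realType} (phi : Binf W -> R)
  (M : 'M[int]_2) (f : QP1 -> W) : \bar R :=
  limn_esup (fun n => (phi (f \o mob ((invmx M) ^+ n)))%:E).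

Definition sim_U {W : Type} (U : nat -> set QP1) (f g : QP1 -> W) : Prop :=
  exists n, forall x, U n x -> f x = g x.

(* Since phi is continuous for the product topology and its support is compact
   modulo Gamma, finitely many Gamma-saturated cylinders, each depending on
   finitely many vertices, cover the support and phi oscillates by less than e
   on each of them. Hence there is a finite K in B such that |phi f - phi g| < e
   whenever f and g agree on K. If f ~+ g then f o gamma^n and g o gamma^n agree
   on K for n large, because gamma^n sends K into U_m^+ on which f and g agree;
   the two sequences phi(f o gamma^n) and phi(g o gamma^n) are thus eventually
   e-close for every e, so they have the same limsup. *)

From HB Require Import structures.
From mathcomp Require Import all_boot all_order all_algebra.
From mathcomp Require Import all_classical all_reals all_analysis.
From mathcomp Require Import ring lra.
Set Implicit Arguments. Unset Strict Implicit. Unset Printing Implicit Defensive.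
Import Order.TTheory GRing.Theory Num.Theory.
Import numFieldNormedType.Exports.
Local Open Scope classical_set_scope.
Local Open Scope ring_scope.

Definition mobius (a b c d : rat) (x : QP1) : QP1 :=
  match x with
  | Some q => if c * q + d == 0 then None else Some ((a * q + b) / (c * q + d))
  | None => if c == 0 then None else Some (a / c)
  end.

Lemma mobius_comp a b c d e f g h x : e * h - f * g != 0 ->
  mobius a b c d (mobius e f g h x) =
  mobius (a * e + b * g) (a * f + b * h) (c * e + d * g) (c * f + d * h) x.
Proof.
move=> det_ne0; case: x => [q|] /=.
- have [den0|den_ne0] := eqVneq (g * q + h) 0.
  + have num_ne0 : e * q + f != 0.
      apply: contra det_ne0 => /eqP num0; apply/eqP.
      have -> : h = - (g * q) by rewrite -(subr0 h) -den0; ring.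
      have -> : f = - (e * q) by rewrite -(subr0 f) -num0; ring.
      ring.
    have -> : (c * e + d * g) * q + (c * f + d * h) = c * (e * q + f) + d * (g * q + h) by ring.
    rewrite den0 mulr0 addr0 /= mulf_eq0 (negbTE num_ne0) orbF.
    case: eqP => // /eqP c_ne0; congr Some.
    have -> : (a * e + b * g) * q + (a * f + b * h) = a * (e * q + f) + b * (g * q + h) by ring.
    by rewrite den0 mulr0 addr0; field; rewrite c_ne0 num_ne0.
  + rewrite /=.
    have -> : c * ((e * q + f) / (g * q + h)) + d =
              ((c * e + d * g) * q + (c * f + d * h)) / (g * q + h) by field.
    rewrite mulf_eq0 invr_eq0 (negbTE den_ne0) orbF.
    by case: eqP => // /eqP ne0; congr Some; field; rewrite ne0 den_ne0.
- have [g0|g_ne0] := eqVneq g 0.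
  + have e_ne0 : e != 0 by apply: contra det_ne0 => /eqP ->; rewrite g0; apply/eqP; ring.
    rewrite g0 /= !mulr0 !addr0 mulf_eq0 (negbTE e_ne0) orbF.
    by case: eqP => // /eqP c_ne0; congr Some; field; rewrite c_ne0 e_ne0.
  + rewrite /=.
    have -> : c * (e / g) + d = (c * e + d * g) / g by field.
    rewrite mulf_eq0 invr_eq0 (negbTE g_ne0) orbF.
    by case: eqP => // /eqP ne0; congr Some; field; rewrite ne0 g_ne0.
Qed.

Lemma mobE (A : 'M[int]_2) :
  mob A = mobius (A 0 0)%:~R (A 0 1)%:~R (A 1 0)%:~R (A 1 1)%:~R.
Proof. by []. Qed.

Lemma det_mx22 (R : comPzRingType) (A : 'M[R]_2) : \det A = A 0 0 * A 1 1 - A 0 1 * A 1 0.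
Proof.
rewrite (expand_det_row _ 0) !big_ord_recl big_ord0 /cofactor !det_mx11 !mxE /=.
have lift01 : lift (0 : 'I_2) (0 : 'I_1) = 1 by apply/val_inj.
have lift10 : lift (1 : 'I_2) (0 : 'I_1) = 0 by apply/val_inj.
by rewrite lift01 lift10 /bump /= expr0 expr1 mulN1r mul1r addr0 mulrN.
Qed.

Lemma mob_mul (A B : 'M[int]_2) x : \det B != 0 -> mob A (mob B x) = mob (A *m B) x.
Proof.
move=> detB; rewrite !mobE mobius_comp; last first.
  by rewrite -!intrM -intrB -det_mx22 intr_eq0.
have lift01 : lift (ord0 : 'I_2) (ord0 : 'I_1) = 1 by apply/val_inj.
by rewrite !mxE !big_ord_recl !big_ord0 !addr0 lift01 !intrD !intrM.
Qed.

Lemma mob1 : mob 1%:M =1 id.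
Proof.
by move=> [q|]; rewrite mobE !mxE /= ?mul0r ?add0r ?mul1r ?addr0 ?oner_eq0 ?divr1.
Qed.

Lemma SL2Z_mul A B : SL2Z A -> SL2Z B -> SL2Z (A *m B).
Proof. by rewrite /SL2Z det_mulmx => -> ->; rewrite mulr1. Qed.

Lemma SL2Z_exp A p : SL2Z A -> SL2Z (A ^+ p).
Proof.
move=> slA; elim: p => [|p IH]; first by rewrite expr0 /SL2Z det1.
by rewrite exprS -mulmxE; apply: SL2Z_mul.
Qed.

Lemma SL2Z_invmx A : SL2Z A -> SL2Z (invmx A).
Proof. by rewrite /SL2Z det_inv => ->; rewrite invr1. Qed.

Lemma SL2Z_unitmx A : SL2Z A -> A \in unitmx.
Proof. by rewrite unitmxE => ->; rewrite unitr1. Qed.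

Lemma mobK A : SL2Z A -> cancel (mob A) (mob (invmx A)).
Proof.
by move=> slA x; rewrite mob_mul ?mulVmx ?mob1 ?SL2Z_unitmx ?slA ?oner_eq0.
Qed.

Lemma mobVK A : SL2Z A -> cancel (mob (invmx A)) (mob A).
Proof.
move=> slA x; rewrite mob_mul ?mulmxV ?mob1 ?SL2Z_unitmx //.
by rewrite (SL2Z_invmx slA) oner_eq0.
Qed.

Lemma image_tri3 (h : QP1 -> QP1) x y z : h @` tri3 x y z = tri3 (h x) (h y) (h z).
Proof.
apply/seteqP; split => [_ [w + <-]|w].
  by case=> [->|[->|->]]; [left|right; left|right; right].
by case=> [->|[->|->]]; [exists x; [left|] | exists y; [right; left|] |
                         exists z; [right; right|]].
Qed.

Lemma farey_triangle_mob A T : SL2Z A -> farey_triangle T -> farey_triangle (mob A @` T).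
Proof.
move=> slA [C [slC ->]]; exists (A *m C); split; first exact: SL2Z_mul.
by rewrite image_tri3 !mob_mul ?slC ?oner_eq0.
Qed.

Lemma tribone_mob A t : SL2Z A -> tribone t ->
  tribone (mob A t.1.1, mob A t.1.2, mob A t.2).
Proof.
move=> slA [n12 n13 n23 farey]; have inj := can_inj (mobK slA).
split=> /=; try by move/inj.
by rewrite -image_tri3; apply: farey_triangle_mob.
Qed.

Lemma Binf0_mob (W : Type) (O3 : set (W * W * W)) A (f : QP1 -> W) :
  SL2Z A -> Binf0 O3 f -> Binf0 O3 (f \o mob A).
Proof.
move=> slA [t [tt O3t]]; exists (mob (invmx A) t.1.1, mob (invmx A) t.1.2, mob (invmx A) t.2).
by split; [apply: tribone_mob (SL2Z_invmx slA) tt | rewrite /= !mobVK].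
Qed.

Section Cylinders.
Context {I : eqType} {T : topologicalType}.

Definition cylinder (K : seq I) (U : I -> set T) : set {ptws I -> T} :=
  [set g | forall x, x \in K -> U x (g x)].

Lemma open_cylinder K U : (forall x, open (U x)) -> open (cylinder K U).
Proof.
move=> oU; elim: K => [|x K IH].
  rewrite (_ : cylinder _ _ = setT); first exact: openT.
  by apply/seteqP; split.
rewrite (_ : cylinder _ _ = (fun g => g x) @^-1` U x `&` cylinder K U).
  by apply: openI => //; apply: open_comp => // g _; apply: proj_continuous.
apply/seteqP; split => g /=.
  by move=> Kg; split=> [|y yK]; apply: Kg; rewrite inE ?eqxx ?yK ?orbT.
by move=> [gx Kg] y; rewrite inE => /predU1P [->|/Kg].
Qed.

Definition cylinder_nbhs (h : {ptws I -> T}) : set_system {ptws I -> T} :=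
  [set V | exists K U, [/\ forall x, open (U x), forall x, U x (h x)
                         & cylinder K U `<=` V]].

#[local] Instance cylinder_nbhs_filter h : Filter (cylinder_nbhs h).
Proof.
constructor.
- by exists [::], (fun=> setT); split=> // x; apply: openT.
- move=> P Q [K1 [U1 [oU1 hU1 sP]]] [K2 [U2 [oU2 hU2 sQ]]].
  exists (K1 ++ K2), (fun x => U1 x `&` U2 x); split=> // [x|g Kg].
    exact: openI.
  by split; [apply: sP | apply: sQ] => x xK; have [] := Kg x; rewrite ?mem_cat ?xK ?orbT.
- by move=> P Q PQ [K [U [oU hU sP]]]; exists K, U; split=> //; apply: subset_trans PQ.
Qed.

Lemma nbhs_cylinder h : nbhs h `<=` cylinder_nbhs h.
Proof.
suff : cylinder_nbhs h --> h by [].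
apply/cvg_sup => i A; rewrite nbhsE => -[_ [[C oC <-] Ch] CA].
exists [:: i], (fun x => if x == i then C else setT); split.
- by move=> x; case: eqP => _; [|apply: openT].
- by move=> x; case: eqP => [->|].
- by move=> g /(_ i (mem_head _ _)); rewrite eqxx => /CA.
Qed.

End Cylinders.

Lemma open_Binf0 (W : topologicalType) (O3 : set (W * W * W)) :
  open O3 -> open (Binf0 O3).
Proof.
move=> oO; rewrite (_ : Binf0 O3 =
  \bigcup_(t in tribone) (fun g : Binf W => (g t.1.1, g t.1.2, g t.2)) @^-1` O3).
  apply: bigcup_open => t _; apply: open_comp => // g _.
  have pc x : (fun g : Binf W => g x) @ g --> g x by apply: proj_continuous.
  exact: (cvg_pair (cvg_pair (pc _) (pc _)) (pc _)).
by apply/seteqP; split => g [t]; [move=> [] | move=> ? ?]; exists t.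
Qed.

Section Limsup.
Context {R : realType}.

Lemma limn_esup_leD (u v : R^nat) (e : R) N :
  (forall n, (N <= n)%N -> u n <= v n + e) ->
  (limn_esup (EFin \o u) <= limn_esup (EFin \o v) + e%:E)%E.
Proof.
move=> uv; rewrite /limn_esup !limf_esupE -leeBlDr //.
apply: le_ereal_inf_tmp => _ [V FV <-]; rewrite leeBlDr //.
have FVN : \oo (V `&` [set n | (N <= n)%N]) by apply: filterI => //; exists N.
apply: (@le_trans _ _ (ereal_sup ((EFin \o u) @` (V `&` [set n | (N <= n)%N])))).
  by apply: ereal_inf_lbound; exists (V `&` [set n | (N <= n)%N]).
apply: ge_ereal_sup => _ [n [Vn Nn] <-].
apply: (@le_trans _ _ ((v n)%:E + e%:E)); first by rewrite -EFinD lee_fin uv.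
by rewrite leeD2r //; apply: ereal_sup_ubound; exists n.
Qed.

Lemma limn_esup_eq (u v : R^nat) :
  (forall e, 0 < e -> exists N, forall n, (N <= n)%N -> `|u n - v n| < e) ->
  limn_esup (EFin \o u) = limn_esup (EFin \o v).
Proof.
move=> uv; apply/eqP; rewrite eq_le; apply/andP; split; apply/lee_addgt0Pr => e e0;
  have [N uvN] := uv e e0; apply: (@limn_esup_leD _ _ _ N) => n /uvN /ltr_normlP [];
  lra.
Qed.

End Limsup.

Section CompactSupport.
Context {R : realType} {W : pseudoMetricType R} {G : Type}.
Variables (mulG : G -> G -> G) (oneG : G) (invG : G -> G) (act : G -> W -> W).
Hypotheses (mulVG : forall a, mulG (invG a) a = oneG)
  (act1 : forall w, act oneG w = w)
  (actM : forall a b w, act (mulG a b) w = act a (act b w))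
  (act_cont : forall a, continuous (act a)).
Variables (O3 : set (W * W * W)) (phi : Binf W -> R).
Hypotheses (O3_open : open O3) (O3_inv : g_invariant (act3 act) O3)
  (phi_cont : {within Binf0 O3, continuous phi})
  (phi_inv : forall a (f : Binf W), Binf0 O3 f -> phi (act a \o f) = phi f)
  (phi_supp : quotient_compact (fun a (f : Binf W) => act a \o f)
                (Binf0 O3) (support_in (Binf0 O3) phi)).

Lemma Binf0_act a (f : Binf W) : Binf0 O3 f -> Binf0 O3 (act a \o f).
Proof. by move=> [t [tt O3t]]; exists t; split => //; exact: O3_inv O3t. Qed.

Let saturation (V : set (Binf W)) : set (Binf W) :=
  Binf0 O3 `&` [set f : Binf W | exists a, V (act a \o f)].

Lemma open_saturation K U : (forall x, open (U x)) -> open (saturation (cylinder K U)).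
Proof.
move=> oU; apply: openI; first exact: open_Binf0.
rewrite (_ : [set f | _] = \bigcup_a cylinder K (fun x => act a @^-1` U x)).
  apply: bigcup_open => a _; apply: open_cylinder => x.
  by apply: (continuousP _).1 (oU x).
by apply/seteqP; split => f [a]; [exists a | move=> _; exists a].
Qed.

Lemma saturation_invariant V :
  g_invariant (fun a (f : Binf W) => act a \o f) (saturation V).
Proof.
move=> b f [X0f [a Vaf]]; split; first exact: Binf0_act.
exists (mulG a (invG b)); congr V: Vaf; apply/funext => x /=.
by rewrite actM -(actM (invG b)) mulVG act1.
Qed.

Lemma cylinder_oscillation h e : Binf0 O3 h -> 0 < e ->
  exists K U, [/\ forall x, open (U x), forall x, U x (h x),
    cylinder K U `<=` Binf0 O3 & forall g, cylinder K U g -> `|phi h - phi g| < e].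
Proof.
move=> X0h e0.
have cphi : {in Binf0 O3, continuous phi}.
  by rewrite -continuous_open_subspace //; apply: open_Binf0.
have : nbhs h (Binf0 O3 `&` phi @^-1` ball (phi h) e).
  apply: filterI; first by apply: open_nbhs_nbhs; split => //; apply: open_Binf0.
  exact: (cphi h (mem_set X0h) _ (nbhsx_ballx _ _ e0)).
move=> /nbhs_cylinder [K [U [oU hU sub]]]; exists K, U.
by split => // [g /sub []|g /sub [_]].
Qed.

Lemma phi_finitely_determined e : 0 < e -> exists K : set QP1, finite_set K /\
  forall f g, Binf0 O3 f -> Binf0 O3 g -> (forall x, K x -> f x = g x) ->
    `|phi f - phi g| < e.
Proof.
move=> e0; have e20 : 0 < e / 2 by rewrite divr_gt0.
have /choice [KU osc] (h : {h | Binf0 O3 h}) : exists KU : seq QP1 * (QP1 -> set W),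
    [/\ forall x, open (KU.2 x), forall x, KU.2 x (sval h x),
    cylinder KU.1 KU.2 `<=` Binf0 O3 &
    forall g, cylinder KU.1 KU.2 g -> `|phi (sval h) - phi g| < e / 2].
  by have [K [U]] := cylinder_oscillation (proj2_sig h) e20; exists (K, U).
pose O h := saturation (cylinder (KU h).1 (KU h).2).
have cover : support_in (Binf0 O3) phi `<=` \bigcup_h O h.
  move=> f [X0f _]; exists (exist _ f X0f) => //; split => //; exists oneG => x _.
  by rewrite /= act1; case: (osc (exist _ f X0f)).
have [|J [finJ coverJ]] := phi_supp _ cover.
  move=> h; split; [|by move=> f []|exact: saturation_invariant].
  by apply: open_saturation; case: (osc h).
pose K := \bigcup_(h in J) [set` (KU h).1]; exists K; split.
  by apply: bigcup_finite => // h _; apply: finite_seq.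
have near_supp f g : Binf0 O3 f -> Binf0 O3 g ->
    (forall x, K x -> f x = g x) ->
    support_in (Binf0 O3) phi f -> `|phi f - phi g| < e.
  move=> X0f X0g fg /coverJ [h Jh [_ [a Kaf]]].
  have [_ _ _ osch] := osc h.
  have Kag : cylinder (KU h).1 (KU h).2 (act a \o g).
    by move=> x xK; rewrite /= -fg; [apply: Kaf | exists h].
  move: (osch _ Kaf) (osch _ Kag); rewrite !phi_inv // => /ltr_normlP [? ?] /ltr_normlP [? ?].
  by apply/ltr_normlP; split; lra.
have phi0 f : Binf0 O3 f -> ~ support_in (Binf0 O3) phi f -> phi f = 0.
  move=> X0f nsupp; apply/eqP; apply: contra_notT nsupp => phif.
  by split => //; apply: subset_closure.
move=> f g X0f X0g fg.
have [/near_supp|nf] := pselect (support_in (Binf0 O3) phi f); first exact.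
have [/(near_supp g f)|ng] := pselect (support_in (Binf0 O3) phi g).
  by rewrite distrC; apply => // x /fg.
by rewrite !phi0 // subrr normr0.
Qed.

Lemma limn_esup_phi_eq (sf sg : nat -> Binf W) :
  (forall n, Binf0 O3 (sf n)) -> (forall n, Binf0 O3 (sg n)) ->
  (forall K, finite_set K ->
     exists N, forall n, (N <= n)%N -> forall x, K x -> sf n x = sg n x) ->
  limn_esup (fun n => (phi (sf n))%:E) = limn_esup (fun n => (phi (sg n))%:E).
Proof.
move=> X0f X0g agree; apply: limn_esup_eq => e /phi_finitely_determined [K [finK detK]].
by have [N agreeN] := agree K finK; exists N => n /agreeN; apply: detK.
Qed.

Lemma limn_esup_phi_mob_sim (A : 'M[int]_2) (U : nat -> set QP1) : SL2Z A ->
  (forall n K, finite_set K ->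
     exists p0, forall p, (p0 <= p)%N -> mob (A ^+ p) @` K `<=` U n) ->
  forall f g : QP1 -> W, Binf0 O3 f -> Binf0 O3 g -> sim_U U f g ->
  limn_esup (fun p => (phi (f \o mob (A ^+ p)))%:E) =
  limn_esup (fun p => (phi (g \o mob (A ^+ p)))%:E).
Proof.
move=> slA absorb f g X0f X0g [n fg].
apply: limn_esup_phi_eq => [p|p|K /(absorb n) [p0 Kp0]].
- exact/Binf0_mob/X0f/SL2Z_exp.
- exact/Binf0_mob/X0g/SL2Z_exp.
- by exists p0 => p /Kp0 KU x Kx; apply/fg/KU; exists x.
Qed.

End CompactSupport.

Theorem mainTheorem9
  (R : realType) (W : pseudoMetricType R) (hW : hausdorff_space W)
  (G : Type) (mulG : G -> G -> G) (oneG : G) (invG : G -> G)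
  (mulGA : forall a b c, mulG a (mulG b c) = mulG (mulG a b) c)
  (mul1G : forall a, mulG oneG a = a)
  (mulVG : forall a, mulG (invG a) a = oneG)
  (act : G -> W -> W)
  (act1 : forall w, act oneG w = w)
  (actM : forall a b w, act (mulG a b) w = act a (act b w))
  (act_cont : forall a, continuous (act a))
  (O3 : set (W * W * W)) (O4 : set (W * W * W * W))
  (O3_open : open O3) (O4_open : open O4)
  (O3_off : O3 `<=` off_diag3) (O4_off : O4 `<=` off_diag4)
  (O3_inv : g_invariant (act3 act) O3) (O4_inv : g_invariant (act4 act) O4)
  (O3_proper : proper_action (act3 act) O3)
  (O4_proper : proper_action (act4 act) O4)
  (O43 : proj43 @` O4 = O3)
  (M : 'M[int]_2) (hM : hyperbolic M)
  (Up Um : nat -> set QP1)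
  (Up_conn : forall n, quadribone_connected (Up n))
  (Um_conn : forall n, quadribone_connected (Um n))
  (Up_decr : forall n, Up n.+1 `<=` Up n)
  (Um_decr : forall n, Um n.+1 `<=` Um n)
  (Up_cap : \bigcap_n Up n = set0)
  (Um_cap : \bigcap_n Um n = set0)
  (Upm_disj : Up 0%N `&` Um 0%N = set0)
  (Up_abs : forall n (K : set QP1), finite_set K ->
      exists p0, forall p, (p0 <= p)%N -> mob (M ^+ p) @` K `<=` Up n)
  (Um_abs : forall n (K : set QP1), finite_set K ->
      exists p0, forall p, (p0 <= p)%N -> mob ((invmx M) ^+ p) @` K `<=` Um n)
  (phi : Binf W -> R)
  (phi_cont : {within (Binf0 O3), continuous phi})
  (phi_inv : forall a (f : Binf W), Binf0 O3 f -> phi (act a \o f) = phi f)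
  (phi_supp : quotient_compact (fun a (f : Binf W) => act a \o f)
                (Binf0 O3) (support_in (Binf0 O3) phi)) :
  (forall f g : QP1 -> W, Binf0 O3 f -> Binf0 O3 g ->
     sim_U Up f g -> phi_plus phi M f = phi_plus phi M g) /\
  (forall f g : QP1 -> W, Binf0 O3 f -> Binf0 O3 g ->
     sim_U Um f g -> phi_minus phi M f = phi_minus phi M g).
Proof.
have slM : SL2Z M by case: hM.
have limsup_eq := limn_esup_phi_mob_sim mulVG act1 actM act_cont O3_open O3_inv
  phi_cont phi_inv phi_supp.
split=> f g X0f X0g sim.
- exact: limsup_eq Up_abs f g X0f X0g sim.
- exact: limsup_eq (SL2Z_invmx slM) Um_abs f g X0f X0g sim.
Qed.
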